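(* Let $\alpha > 0$, $\beta > 0$, $T > 0$, and $\tau > 0$ with $T/\tau \in \mathbb{N}$. For $u \in \mathrm{H}^1(0,T)$ let $v$ be its upwinded interpolant on $[0,T]$. Then there is a constant $C$, independent of $\alpha$ and $\tau$, such that $$\int_0^T | u - v|^2 \leq C \tau^2 \int_0^T |\dot u|^2,$$ where $\dot u$ denotes the derivative of $u$.
   Context: Given $\alpha, \beta > 0$ and the mesh of nodes $k\tau$, the upwinded interpolant of a continuous function $u$ is the unique continuous function $v$ with $v(k\tau) = u(k\tau)$ at every node and which, on each mesh interval $[k\tau, (k+1)\tau]$, is of the form $v(t) = c_1 + c_2 \exp(-\beta t/\alpha)$ for constants $c_1, c_2$ (depending on the interval). *)

From HB Require Import structures.
From mathcomp Require Import all_boot all_order all_algebra.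
From mathcomp Require Import all_classical all_reals all_analysis.
Set Implicit Arguments. Unset Strict Implicit. Unset Printing Implicit Defensive.
Import Order.TTheory GRing.Theory Num.Theory.
Import numFieldNormedType.Exports.
Local Open Scope classical_set_scope.
Local Open Scope ring_scope.

(* [H1_deriv T u g] : u belongs to H^1(0,T) with weak derivative g, i.e.
   g is measurable, integrable and square integrable on [0,T], and
   u t = u 0 + \int_0^t g  for all t in [0,T]. *)
Definition H1_deriv (R : realType) (T : R) (u g : R -> R) : Prop :=
  [/\ measurable_fun `[0%R, T] g,
      (@lebesgue_measure R).-integrable `[0%R, T] (EFin \o g),
      (\int[@lebesgue_measure R]_(x in `[0%R, T]) ((g x) ^+ 2)%:E < +oo)%E
    & forall t, 0 <= t <= T ->
        u t = u 0 + fine (\int[@lebesgue_measure R]_(x in `[0%R, t]) (g x)%:E)].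

Definition upwind_interpolant (R : realType) (alpha beta tau : R) (N : nat)
    (u v : R -> R) : Prop :=
  [/\ {within `[0, N%:R * tau], continuous v},
      (forall k : nat, (k <= N)%N -> v (k%:R * tau) = u (k%:R * tau))
    & (forall k : nat, (k < N)%N -> exists c1 c2 : R,
        forall t, k%:R * tau <= t <= k.+1%:R * tau ->
          v t = c1 + c2 * expR (- (beta * t / alpha)))].

From HB Require Import structures.
From mathcomp Require Import all_boot all_order all_algebra.
From mathcomp Require Import all_classical all_reals all_analysis.
From mathcomp Require Import measurable_realfun ring lra.
Import Order.TTheory GRing.Theory Num.Theory.
Import numFieldNormedType.Exports.
Local Open Scope classical_set_scope.
Local Open Scope ring_scope.

(* On a mesh cell [a, b] the interpolant is c1 + c2 exp(-beta t / alpha), a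
   monotone function of t agreeing with u at both ends, so |v x - v a| is at
   most |u b - u a|.  Both this and |u x - u a| are bounded by the integral
   of |u'| over the cell, hence pointwise
     |u - v| <= 2 \int_a^b |u'| <= 2 sqrt ((b - a) \int_a^b u'^2)
   by Cauchy-Schwarz.  Integrating over the cell gives
   \int_a^b |u - v|^2 <= 4 tau^2 \int_a^b u'^2, and summing over the cells
   yields the estimate with C = 4, whatever alpha and tau. *)

Section upwind_estimates.
Context {R : realType}.
Local Notation mu := (@lebesgue_measure R).

Lemma integrable_cst_itv (a b k : R) :
  mu.-integrable `[a, b] (EFin \o cst k).
Proof.
apply: continuous_compact_integrable; first exact: segment_compact.
by apply: continuous_subspaceT => x; exact: cst_continuous.
Qed.

(* Integrate [2 c |g| <= g^2 + c^2] and choose [c] as the mean of [|g|]. *)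
Lemma sqr_Rintegral_norm_le (g : R -> R) (a b : R) : a < b ->
  mu.-integrable `[a, b] (EFin \o g) ->
  mu.-integrable `[a, b] (EFin \o (fun x => g x ^+ 2)) ->
  (\int[mu]_(x in `[a, b]) `|g x|) ^+ 2
    <= (b - a) * \int[mu]_(x in `[a, b]) g x ^+ 2.
Proof.
move=> ab ig ig2; have ba_gt0 : 0 < b - a by lra.
set A := \int[mu]_(x in `[a, b]) `|g x|.
set B := \int[mu]_(x in `[a, b]) g x ^+ 2.
have amgm c : 2 * c * A <= B + c ^+ 2 * (b - a).
  have igc := integrable_cst_itv a b (c ^+ 2).
  have : \int[mu]_(x in `[a, b]) (2 * c * `|g x|)
         <= \int[mu]_(x in `[a, b]) (g x ^+ 2 + c ^+ 2).
    apply: le_Rintegral => //.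
    - exact: eq_integrable _ _ _ _ (integrableZl _ (2 * c) (integrable_norm ig)).
    - exact: eq_integrable _ _ _ _ (integrableD _ ig2 igc).
    move=> x _; rewrite -[g x ^+ 2]real_normK ?num_real //.
    by have := sqr_ge0 (`|g x| - c); lra.
  rewrite RintegralZl ?RintegralD ?Rintegral_cst //; last exact: integrable_norm.
  suff -> : fine (mu `[a, b]) = b - a by [].
  by rewrite lebesgue_measure_itv /= lte_fin ab -EFinB.
have [c eA] : exists c, A = c * (b - a).
  by exists (A / (b - a)); rewrite divfK // gt_eqF.
have := amgm c; rewrite eA; nra.
Qed.

Lemma ge0_subset_Rintegral d (T : measurableType d) (nu : {measure set T -> \bar R})
    (A B : set T) (f : T -> R) :
  measurable A -> measurable B -> A `<=` B ->
  nu.-integrable B (EFin \o f) -> (forall x, B x -> 0 <= f x) ->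
  \int[nu]_(x in A) f x <= \int[nu]_(x in B) f x.
Proof.
move=> mA mB AB iB f0.
have iA : nu.-integrable A (EFin \o f) by exact: integrableS iB.
rewrite /Rintegral; apply: fine_le; try exact: integrable_fin_num.
by apply: ge0_subset_integral => //; case/integrableP: iB.
Qed.

Section H1_function.
Context {T : R} {u g : R -> R}.
Hypothesis ug : H1_deriv T u g.

Lemma H1_deriv_sqr_integrable :
  mu.-integrable `[0, T] (EFin \o (fun x => g x ^+ 2)).
Proof.
case: ug => measg _ ig2 _; apply/integrableP; split.
  by apply/measurable_EFinP; exact: measurable_funX.
under eq_integral do rewrite /= ger0_norm ?sqr_ge0 //.
exact: ig2.
Qed.

Lemma H1_deriv_oscillation {a x b : R} : 0 <= a -> a <= x -> x <= b -> b <= T ->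
  `|u x - u a| <= \int[mu]_(t in `[a, b]) `|g t|.
Proof.
move=> a0 ax xb bT; have [_ ig _ hu] := ug.
rewrite (hu x) ?(hu a); try by apply/andP; split; lra.
rewrite opprD addrACA subrr add0r.
have ix : mu.-integrable `[0, x] (EFin \o g).
  by apply: integrableS ig => //; apply: subset_itvl; rewrite bnd_simp; lra.
change (`|\int[mu]_(t in `[0, x]) g t - \int[mu]_(t in `[0, a]) g t|
        <= \int[mu]_(t in `[a, b]) `|g t|).
rewrite Rintegral_itvB ?bnd_simp //.
have iax : mu.-integrable `]a, x] (EFin \o g).
  by apply: integrableS ix => //; apply: subset_itvr; rewrite bnd_simp; lra.
apply: le_trans (le_normr_Rintegral _ iax) _ => //.
apply: ge0_subset_Rintegral => //.
- by apply: subset_itv; rewrite bnd_simp; lra.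
- apply/integrable_norm/(integrableS _ _ _ ig) => //.
  by apply: subset_itv; rewrite bnd_simp; lra.
Qed.

Lemma H1_deriv_integrable_itv {a b : R} : 0 <= a -> b <= T ->
  mu.-integrable `[a, b] (EFin \o g) /\
  mu.-integrable `[a, b] (EFin \o (fun x => g x ^+ 2)).
Proof.
move=> a0 bT; have [_ ig _ _] := ug.
have sab : `[a, b] `<=` `[0, T] by apply: subset_itv; rewrite bnd_simp.
split; first exact: integrableS ig.
exact: integrableS H1_deriv_sqr_integrable.
Qed.

Lemma H1_deriv_measurable : 0 <= T -> measurable_fun `[0, T] u.
Proof.
move=> T_ge0; have [_ ig _ hu] := ug.
apply: (eq_measurable_fun
  (fun x => u 0 + parameterized_integral mu 0 x g)) => [x /set_mem xT|].
  by rewrite [RHS]hu.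
apply: measurable_funD => //; apply: subspace_continuous_measurable_fun => //.
exact: parameterized_integral_continuous.
Qed.

Section upwind_cell.
Context {v e : R -> R} {a b c1 c2 : R}.
Hypotheses (a_ge0 : 0 <= a) (ab : a < b) (bT : b <= T).
Hypotheses (va : v a = u a) (vb : v b = u b).
Hypothesis v_affine : forall t, a <= t <= b -> v t = c1 + c2 * e t.
Hypothesis e_nonincr : {in `[a, b] &, {homo e : s t /~ s <= t}}.

Lemma upwind_cell_sqr_le x : a <= x <= b ->
  (u x - v x) ^+ 2 <= 4 * (b - a) * \int[mu]_(t in `[a, b]) g t ^+ 2.
Proof.
move=> /andP[ax xb].
have in_ab t : a <= t -> t <= b -> t \in `[a, b] by rewrite in_itv /= => -> ->.
have [ig ig2] := H1_deriv_integrable_itv a_ge0 bT.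
set A := \int[mu]_(t in `[a, b]) `|g t|.
have vx_osc : `|v x - v a| <= `|v b - v a|.
  have ex_le := e_nonincr _ _ (in_ab _ ax xb) (in_ab _ (lexx a) (ltW ab)) ax.
  have eb_le := e_nonincr _ _ (in_ab _ (ltW ab) (lexx b)) (in_ab _ ax xb) xb.
  rewrite !v_affine ?lexx ?ax ?xb ?(ltW ab) //.
  have affineB s t : c1 + c2 * s - (c1 + c2 * t) = c2 * (s - t) by ring.
  rewrite !affineB !normrM.
  rewrite ler_wpM2l // !ler0_norm ?subr_le0 //; first by rewrite lerN2 lerD2r.
  exact: le_trans eb_le ex_le.
have dev : `|u x - v x| <= 2 * A.
  have := H1_deriv_oscillation a_ge0 ax xb bT.
  have := H1_deriv_oscillation a_ge0 (ltW ab) (lexx b) bT.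
  rewrite -/A -va -vb in vx_osc *.
  have -> : u x - v x = (u x - v a) - (v x - v a) by ring.
  have := ler_normB (u x - v a) (v x - v a); lra.
have A_ge0 : 0 <= A by apply: Rintegral_ge0.
have := sqr_Rintegral_norm_le _ _ _ ab ig ig2; rewrite -/A.
rewrite -[(u x - v x) ^+ 2]real_normK ?num_real //.
have := normr_ge0 (u x - v x); nra.
Qed.

Lemma upwind_cell_integral_le :
  measurable_fun `]a, b] (fun x => (u x - v x) ^+ 2) ->
  (\int[mu]_(x in `]a, b]) ((u x - v x) ^+ 2)%:E
    <= (4 * (b - a) ^+ 2)%:E * \int[mu]_(x in `]a, b]) (g x ^+ 2)%:E)%E.
Proof.
move=> mw; have [_ ig2] := H1_deriv_integrable_itv a_ge0 bT.
set B := \int[mu]_(t in `[a, b]) g t ^+ 2.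
have -> : (\int[mu]_(x in `]a, b]) (g x ^+ 2)%:E)%E = B%:E.
  rewrite integral_itv_obnd_cbnd; last first.
    by apply: measurable_funS (measurable_int _ ig2) => //; exact: subset_itv_oc_cc.
  by rewrite /B /Rintegral fineK //; exact: integrable_fin_num.
apply: (@le_trans _ _ (\int[mu]_(x in `]a, b]) (4 * (b - a) * B)%:E)%E).
  apply: ge0_le_integral => //.
  - by move=> x _; rewrite lee_fin sqr_ge0.
  - exact/measurable_EFinP.
  move=> x; rewrite /= in_itv /= => /andP[ax xb].
  by rewrite lee_fin upwind_cell_sqr_le // (ltW ax) xb.
have mu_ab : mu `]a, b] = (b - a)%:E.
  by rewrite lebesgue_measure_itv /= lte_fin ab -EFinB.
by rewrite integral_cst //= mu_ab -!EFinM lee_fin expr2 !mulrA mulrAC.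
Qed.

End upwind_cell.

End H1_function.

Lemma ge0_integral_cells_le (f h : R -> R) (c tau : R) (N : nat) :
  0 <= tau -> (forall x, 0 <= f x) -> (forall x, 0 <= h x) ->
  measurable_fun `[0, N%:R * tau] f -> measurable_fun `[0, N%:R * tau] h ->
  (forall k, (k < N)%N ->
    \int[mu]_(x in `](k%:R * tau)%R, (k.+1%:R * tau)%R]) (f x)%:E
      <= c%:E * \int[mu]_(x in `](k%:R * tau)%R, (k.+1%:R * tau)%R]) (h x)%:E)%E ->
  (\int[mu]_(x in `[0%R, (N%:R * tau)%R]) (f x)%:E
    <= c%:E * \int[mu]_(x in `[0%R, (N%:R * tau)%R]) (h x)%:E)%E.
Proof.
move=> tau_ge0 f_ge0 h_ge0 mf mh cell_le.
suff : forall m, (m <= N)%N ->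
    (\int[mu]_(x in `[0%R, (m%:R * tau)%R]) (f x)%:E
      <= c%:E * \int[mu]_(x in `[0%R, (m%:R * tau)%R]) (h x)%:E)%E by apply.
elim=> [_|m IHm mN]; first by rewrite mul0r set_itv1 !integral_set1 mule0.
set a := m%:R * tau; set b := m.+1%:R * tau.
have ab : a <= b by rewrite ler_wpM2r // ler_nat.
have split_ab : `[0, b]%classic = `[0, a] `|` `]a, b] :> set R.
  by apply: itv_bndbnd_setU; rewrite bnd_simp // mulr_ge0.
have sub_b : (`[0, b] `<=` `[0, N%:R * tau])%classic.
  by apply: subset_itv; rewrite bnd_simp // ler_wpM2r // ler_nat.
have disj : [disjoint `[0, a]%classic & `]a, b]%classic].
  rewrite disj_set2E; apply/eqP; rewrite -subset0 => x [] /=.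
  by rewrite !in_itv /= => /andP[_ xa] /andP[ax _]; lra.
have mfb : measurable_fun `[0, b] (EFin \o f).
  by apply/measurable_EFinP; exact: measurable_funS mf.
have mhb : measurable_fun `[0, b] (EFin \o h).
  by apply/measurable_EFinP; exact: measurable_funS mh.
rewrite split_ab in mfb mhb *.
rewrite !ge0_integral_setU //; try by move=> x _; rewrite lee_fin.
rewrite muleDr //; last first.
  by rewrite ge0_adde_def // inE; apply: integral_ge0 => x _; rewrite lee_fin.
by apply: leeD; [exact: IHm (ltnW mN) | exact: cell_le].
Qed.

End upwind_estimates.

Theorem proposition9 (R : realType) (beta T : R) :
  0 < beta -> 0 < T ->
  exists C : R,
    forall (alpha tau : R) (N : nat) (u g v : R -> R),
      0 < alpha -> 0 < tau -> T = N%:R * tau ->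
      H1_deriv T u g ->
      upwind_interpolant alpha beta tau N u v ->
      (\int[@lebesgue_measure R]_(x in `[0%R, T]) ((u x - v x) ^+ 2)%:E
        <= (C * tau ^+ 2)%:E
           * \int[@lebesgue_measure R]_(x in `[0%R, T]) ((g x) ^+ 2)%:E)%E.
Proof.
move=> beta_gt0 T_gt0; exists 4.
move=> alpha tau N u g v alpha_gt0 tau_gt0 TN ug [v_cont v_nodes v_cells].
have decay_nonincr : {homo (fun t => expR (- (beta * t / alpha))) : s t /~ s <= t}.
  by move=> s t st; rewrite ler_expR lerN2 ler_pM2r ?invr_gt0 // ler_pM2l.
have measu : measurable_fun `[0, T] u := H1_deriv_measurable ug (ltW T_gt0).
have measv : measurable_fun `[0, T] v.
  by apply: subspace_continuous_measurable_fun => //; rewrite TN.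
have [measg _ _ _] := ug.
rewrite TN in measu measv measg *; apply: ge0_integral_cells_le => //.
- exact: ltW.
- by move=> x; exact: sqr_ge0.
- by move=> x; exact: sqr_ge0.
- by apply: measurable_funX; exact: measurable_funB.
- exact: measurable_funX.
move=> k kN; have [c1 [c2 v_affine]] := v_cells k kN.
have a_ge0 : 0 <= k%:R * tau by rewrite mulr_ge0 // ltW.
have ab : k%:R * tau < k.+1%:R * tau by rewrite ltr_pM2r // ltr_nat.
have bN : k.+1%:R * tau <= N%:R * tau by rewrite ler_pM2r // ler_nat.
have cell_tau : k.+1%:R * tau - k%:R * tau = tau.
  by rewrite -mulrBl -natrB // subSnn mul1r.
rewrite -[in X in (X%:E * _)%E]cell_tau.
apply: (upwind_cell_integral_le ug a_ge0 ab _ _ _ v_affine (in2W decay_nonincr)).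
- by rewrite TN.
- exact/v_nodes/ltnW.
- exact: v_nodes.
apply: measurable_funS (measurable_funX 2 (measurable_funB measu measv)) => //.
by apply: subset_itv; rewrite bnd_simp.
Qed.
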